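(* Let $\gamma\in(0,1)$, $c\in\mathbb{R}$, $\sigma^2>0$, and $\alpha_0\in(0,1]$. Define recursively, for $n\ge2$, $$\alpha_{n-1}=\frac{(1-\gamma)\lambda^{n-1}\sigma^2+\big(1-(1-\gamma)\delta^{n-1}\big)^2c^2}{(1-\gamma)^2\lambda^{n-1}\sigma^2+\big(1-(1-\gamma)\delta^{n-1}\big)^2c^2+\sigma^2},$$ where $\delta^1=\alpha_0$, $\lambda^1=\alpha_0^2$, and for $m>1$, $\delta^m=\alpha_{m-1}+(1-(1-\gamma)\alpha_{m-1})\delta^{m-1}$, $\lambda^m=\alpha_{m-1}^2+(1-(1-\gamma)\alpha_{m-1})^2\lambda^{m-1}$. Then $\lim_{n\to\infty}\delta^n=\frac{1}{1-\gamma}$.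
   Context: The formula for $\alpha_{n-1}$ is the prediction-error-minimizing stepsize for approximate value iteration in a single-state, single-action problem with i.i.d. rewards of mean $c$, variance $\sigma^2$, and discount factor $\gamma$; $\delta^n c$ is the mean of the $n$-th value estimate. *)

From HB Require Import structures.
From mathcomp Require Import all_boot all_order all_algebra.
From mathcomp Require Import all_classical all_reals topology normedtype sequences.
Set Implicit Arguments. Unset Strict Implicit. Unset Printing Implicit Defensive.
Import Order.TTheory GRing.Theory Num.Theory.
Local Open Scope ring_scope.

Section Defs.
Variable R : realType.

Definition alpha_of (g s2 c d l : R) : R :=
  ((1 - g) * l * s2 + (1 - (1 - g) * d) ^+ 2 * c ^+ 2) /
  ((1 - g) ^+ 2 * l * s2 + (1 - (1 - g) * d) ^+ 2 * c ^+ 2 + s2).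

Definition dl_step (g s2 c : R) (p : R * R) : R * R :=
  let a := alpha_of g s2 c p.1 p.2 in
  (a + (1 - (1 - g) * a) * p.1, a ^+ 2 + (1 - (1 - g) * a) ^+ 2 * p.2).

(* dl k = (delta^{k+1}, lambda^{k+1}) *)
Fixpoint dl (g s2 c a0 : R) (k : nat) : R * R :=
  match k with
  | 0 => (a0, a0 ^+ 2)
  | k'.+1 => dl_step g s2 c (dl g s2 c a0 k')
  end.

(* delta^n for n >= 1 (value at n = 0 is irrelevant) *)
Definition delta (g s2 c a0 : R) (n : nat) : R := (dl g s2 c a0 n.-1).1.
Definition lambda (g s2 c a0 : R) (n : nat) : R := (dl g s2 c a0 n.-1).2.
End Defs.

From HB Require Import structures.
From mathcomp Require Import all_boot all_order all_algebra.
From mathcomp Require Import all_classical all_reals topology normedtype sequences.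
From mathcomp Require Import ring lra.
Import Order.TTheory GRing.Theory Num.Theory numFieldNormedType.Exports.
Local Open Scope classical_set_scope.
Local Open Scope ring_scope.

(* Put b = 1 - gamma, e_k = 1 - b delta^(k+1) and r_k = b alpha_k.  The recursion
   for delta gives e_(k+1) = (1 - r_k) e_k, so e_k <= prod_(i<k) (1 - r_i)
   <= (1 + sum_(i<k) r_i)^-1.  The recursion for lambda satisfies
   1/lambda^(k+1) <= 1/lambda^k + b^2, so lambda^k decays at most like 1/k, and the
   formula for alpha then yields r_k >= h/(k+1) for a constant h > 0.  Hence the
   r_k sum to infinity like the harmonic series, e_k -> 0 and delta^k -> 1/b. *)

Section LambdaStep.
Variables (R : realFieldType) (a b l : R).

Lemma le_lambda_step : l <= (a ^+ 2 + (1 - b * a) ^+ 2 * l) * (1 + b ^+ 2 * l).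
Proof.
rewrite -subr_ge0.
have -> : (a ^+ 2 + (1 - b * a) ^+ 2 * l) * (1 + b ^+ 2 * l) - l
    = ((1 + b ^+ 2 * l) * a - b * l) ^+ 2 by ring.
exact: sqr_ge0.
Qed.

Hypothesis l_gt0 : 0 < l.

Lemma lambda_step_gt0 : 0 < a ^+ 2 + (1 - b * a) ^+ 2 * l.
Proof.
have den_gt0 : 0 < 1 + b ^+ 2 * l by rewrite ltr_pwDl // mulr_ge0 ?sqr_ge0 ?ltW.
by rewrite -(pmulr_lgt0 _ den_gt0) (lt_le_trans l_gt0) ?le_lambda_step.
Qed.

Lemma inv_lambda_step_le : (a ^+ 2 + (1 - b * a) ^+ 2 * l)^-1 <= l^-1 + b ^+ 2.
Proof.
have -> : l^-1 + b ^+ 2 = (1 + b ^+ 2 * l) / l by field; exact: lt0r_neq0.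
rewrite ler_pdivlMr // mulrC ler_pdivrMr ?lambda_step_gt0 // mulrC.
exact: le_lambda_step.
Qed.

End LambdaStep.

Lemma prod_1B_le_inv_1D_sum {R : realFieldType} (x : nat -> R) (n : nat) :
  (forall i, 0 <= x i <= 1) ->
  \prod_(0 <= i < n) (1 - x i) <= (1 + \sum_(0 <= i < n) x i)^-1.
Proof.
move=> x01.
have sum_ge0 m : 0 <= \sum_(0 <= i < m) x i.
  by apply: sumr_ge0 => i _; have /andP[] := x01 i.
rewrite -div1r ler_pdivlMr ?ltr_pwDl //.
elim: n => [|n IHn]; first by rewrite !big_geq // addr0 mulr1.
have /andP[xn_ge0 _] := x01 n.
have prod_ge0 : 0 <= \prod_(0 <= i < n) (1 - x i).
  by apply: prodr_ge0 => i _; have := x01 i; lra.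
move: (sum_ge0 n); rewrite big_nat_recr //= big_nat_recr //=.
set p := \prod_(0 <= i < n) _ in IHn prod_ge0 *.
set s := \sum_(0 <= i < n) _ in IHn *.
move=> s_ge0; have : 0 <= p * (x n * (s + x n)) by rewrite !mulr_ge0 // addr_ge0.
have -> : p * (1 - x n) * (1 + (s + x n)) = p * (1 + s) - p * (x n * (s + x n)).
  by ring.
lra.
Qed.

Lemma series_harmonic_cvgy (R : realType) : series (@harmonic R) @ \oo --> +oo.
Proof.
apply: nondecreasing_dvgn_lt (@dvg_harmonic R).
by apply/nondecreasing_seqP => n; rewrite seriesSr lerDl harmonic_ge0.
Qed.

Section Alpha.
Context {R : realType} {g s2 c d l : R}.
Hypotheses (g_gt0 : 0 < g) (g_lt1 : g < 1) (s2_gt0 : 0 < s2) (l_ge0 : 0 <= l).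

Local Notation b := (1 - g).
Local Notation E := ((1 - b * d) ^+ 2 * c ^+ 2).
Local Notation den := (b ^+ 2 * l * s2 + E + s2).

Let b_gt0 : 0 < b. Proof. by rewrite subr_gt0. Qed.
Let E_ge0 : 0 <= E. Proof. by rewrite mulr_ge0 ?sqr_ge0. Qed.
Let den_gt0 : 0 < den.
Proof.
apply: ltr_pwDr s2_gt0 (addr_ge0 _ E_ge0).
by rewrite !mulr_ge0 ?sqr_ge0 // ltW.
Qed.

Lemma alpha_of_ge0 : 0 <= alpha_of g s2 c d l.
Proof.
apply: divr_ge0 (ltW den_gt0).
exact: addr_ge0 (mulr_ge0 (mulr_ge0 (ltW b_gt0) l_ge0) (ltW s2_gt0)) E_ge0.
Qed.

Lemma mul_alpha_of_lt1 : b * alpha_of g s2 c d l < 1.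
Proof.
rewrite mulrA ltr_pdivrMr // mul1r.
have : b * E <= E by rewrite ler_piMl // lerBlDr lerDl ltW.
have -> : b * (b * l * s2 + E) = b ^+ 2 * l * s2 + b * E by ring.
move: s2_gt0; lra. (* lra does not see section hypotheses *)
Qed.

Lemma alpha_of_lower_bound : (1 - b * d) ^+ 2 <= 1 -> 0 < l ->
  b ^+ 2 * s2 / (b ^+ 2 * s2 + (c ^+ 2 + s2) / l) <= b * alpha_of g s2 c d l.
Proof.
move=> e_le1 l_gt0.
set P := b ^+ 2 * s2; set K := c ^+ 2 + s2.
have Pl_gt0 : 0 < P * l by rewrite !mulr_gt0 // exprn_gt0.
have K_gt0 : 0 < K by apply: ltr_pwDr; rewrite ?sqr_ge0.
have -> : P / (P + K / l) = P * l / (P * l + K).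
  by field; rewrite !lt0r_neq0 // addr_gt0.
have den_le : den <= P * l + K.
  have : E <= c ^+ 2 by rewrite -[X in _ <= X]mul1r ler_wpM2r ?sqr_ge0.
  rewrite /P /K; lra.
rewrite ler_pdivrMr; last exact: addr_gt0 Pl_gt0 K_gt0.
have ba_ge0 : 0 <= b * alpha_of g s2 c d l by rewrite mulr_ge0 ?alpha_of_ge0 ?ltW.
apply: le_trans (ler_wpM2l ba_ge0 den_le).
rewrite /alpha_of -[_ * _ * den]mulrA divfK ?lt0r_neq0 // /P.
have -> : b ^+ 2 * s2 * l = b * (b * l * s2) by ring.
by rewrite ler_wpM2l ?(ltW b_gt0) // lerDl.
Qed.

End Alpha.

Section Iteration.
Variables (R : realType) (g s2 c a0 : R).
Hypotheses (g_gt0 : 0 < g) (g_lt1 : g < 1) (s2_gt0 : 0 < s2).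
Hypotheses (a0_gt0 : 0 < a0) (a0_le1 : a0 <= 1).

Local Notation b := (1 - g).
Local Notation d k := (dl g s2 c a0 k).1.
Local Notation lam k := (dl g s2 c a0 k).2.
Local Notation rate k := (b * alpha_of g s2 c (d k) (lam k)).

Let b_gt0 : 0 < b. Proof. by rewrite subr_gt0. Qed.
Let b_le1 : b <= 1. Proof. by rewrite lerBlDr lerDl ltW. Qed.

Lemma lam_gt0 k : 0 < lam k.
Proof.
by elim: k => [|k IHk] /=; [exact: exprn_gt0 | exact: lambda_step_gt0].
Qed.

Lemma inv_lam_le k : (lam k)^-1 <= a0 ^- 2 + k%:R * b ^+ 2.
Proof.
elim: k => [|k IHk]; first by rewrite mul0r addr0.
rewrite /= /dl_step /=.
apply: le_trans (@inv_lambda_step_le _ _ _ _ (lam_gt0 k)) _.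
by rewrite -natr1 mulrDl mul1r addrA lerD2r.
Qed.

Lemma rate_ge0 k : 0 <= rate k.
Proof. by rewrite mulr_ge0 ?(ltW b_gt0) ?alpha_of_ge0 ?(ltW (lam_gt0 k)). Qed.

Lemma rate_lt1 k : rate k < 1.
Proof. by rewrite mul_alpha_of_lt1 ?(ltW (lam_gt0 k)). Qed.

Lemma one_sub_delta_prod k :
  1 - b * d k = (1 - b * a0) * \prod_(0 <= i < k) (1 - rate i).
Proof.
elim: k => [|k IHk]; first by rewrite big_geq // mulr1.
by rewrite big_nat_recr //= mulrA -IHk; ring.
Qed.

Let one_sub_ba0_itv : 0 <= 1 - b * a0 <= 1.
Proof.
have [b_ge0 a0_ge0] := (ltW b_gt0, ltW a0_gt0).
by rewrite subr_ge0 mulr_ile1 //= lerBlDr lerDl mulr_ge0.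
Qed.

Let prod_one_sub_rate_itv k : 0 <= \prod_(0 <= i < k) (1 - rate i) <= 1.
Proof.
have one_sub_rate_itv i : 0 <= 1 - rate i <= 1.
  by rewrite subr_ge0 (ltW (rate_lt1 i)) /= lerBlDr lerDl rate_ge0.
by rewrite prodr_ge0 ?prodr_ile1 // => i _; have /andP[] := one_sub_rate_itv i.
Qed.

Lemma one_sub_delta_itv k : 0 <= 1 - b * d k <= 1.
Proof.
have /andP[? ?] := one_sub_ba0_itv; have /andP[? ?] := prod_one_sub_rate_itv k.
by rewrite one_sub_delta_prod mulr_ge0 //= mulr_ile1.
Qed.

Local Notation P := (b ^+ 2 * s2).
Local Notation K := (c ^+ 2 + s2).
Local Notation Q := (P + K * (a0 ^- 2 + b ^+ 2)).

Let P_gt0 : 0 < P. Proof. by rewrite mulr_gt0 // exprn_gt0. Qed.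
Let K_gt0 : 0 < K. Proof. by apply: ltr_pwDr; rewrite ?sqr_ge0. Qed.
Let Q_gt0 : 0 < Q.
Proof.
apply: ltr_pwDl P_gt0 (mulr_ge0 (ltW K_gt0) (addr_ge0 _ (sqr_ge0 _))).
by rewrite invr_ge0 sqr_ge0.
Qed.

Lemma rate_ge_harmonic k : P / Q * harmonic k <= rate k.
Proof.
have /andP[e_ge0 e_le1] := one_sub_delta_itv k.
have e2_le1 : (1 - b * d k) ^+ 2 <= 1 by rewrite expr_le1.
apply: le_trans (alpha_of_lower_bound g_lt1 s2_gt0 (ltW (lam_gt0 k)) e2_le1 (lam_gt0 k)).
rewrite /= -mulrA -invfM ler_pM2l // lef_pV2 ?posrE; first last.
- exact: addr_gt0 P_gt0 (divr_gt0 K_gt0 (lam_gt0 k)).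
- exact: mulr_gt0 Q_gt0 (ltr0Sn _ _).
rewrite -subr_ge0 -natr1.
have -> : Q * (k%:R + 1) - (P + K / lam k) =
    k%:R * P + k%:R * K * a0 ^- 2 + K * b ^+ 2
    + K * (a0 ^- 2 + k%:R * b ^+ 2 - (lam k)^-1) by ring.
have [b_ge0 s2_ge0 K_ge0] := And3 (ltW b_gt0) (ltW s2_gt0) (ltW K_gt0).
by rewrite !addr_ge0 ?mulr_ge0 ?ler0n ?invr_ge0 ?sqr_ge0 // subr_ge0 inv_lam_le.
Qed.

Lemma one_sub_delta_cvg0 : (fun k => 1 - b * d k) @ \oo --> 0.
Proof.
pose S k := \sum_(0 <= i < k) rate i.
have S_ge0 k : 0 <= S k by apply: sumr_ge0 => i _; exact: rate_ge0.
have S_cvgy : S @ \oo --> +oo.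
  have PQ_gt0 : 0 < P / Q by rewrite divr_gt0.
  have hS k : P / Q * series harmonic k <= S k.
    by rewrite /series /= mulr_sumr; apply: ler_sum => i _; exact: rate_ge_harmonic.
  apply/cvgryPge => A; move/cvgryPge: (@series_harmonic_cvgy R) => /(_ (A / (P / Q))).
  by apply: filterS => k; rewrite ler_pdivrMr // mulrC => /le_trans; apply.
apply: (@squeeze_cvgr _ _ _ _ (cst 0) (fun k => (1 + S k)^-1)); last 2 first.
- exact: cvg_cst.
- apply/gtr0_cvgV0; first by apply: nearW => k; rewrite ltr_pwDl.
  by apply: ger_cvgy S_cvgy; apply: nearW => k; rewrite lerDr.
apply: nearW => k; have /andP[e_ge0 _] := one_sub_delta_itv k.
rewrite /cst e_ge0 /= one_sub_delta_prod.
have /andP[? ?] := one_sub_ba0_itv; have /andP[? _] := prod_one_sub_rate_itv k.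
have rate_itv i : 0 <= rate i <= 1 by rewrite rate_ge0 ltW ?rate_lt1.
by apply: le_trans (prod_1B_le_inv_1D_sum _ k rate_itv); rewrite ler_piMl.
Qed.

End Iteration.

Theorem proposition5 (R : realType) (g c s2 a0 : R) :
  0 < g < 1 -> 0 < s2 -> 0 < a0 <= 1 ->
  delta g s2 c a0 @ \oo --> (1 - g)^-1.
Proof.
move=> /andP[g_gt0 g_lt1] s2_gt0 /andP[a0_gt0 a0_le1].
have e_cvg0 := one_sub_delta_cvg0 _ _ _ c _ g_gt0 g_lt1 s2_gt0 a0_gt0 a0_le1.
rewrite -cvg_shiftS (_ : (1 - g)^-1 = (1 - g)^-1 - (1 - g)^-1 * 0); last first.
  by rewrite mulr0 subr0.
apply: cvg_trans (cvgB (cvg_cst _) (cvgM (cvg_cst _) e_cvg0)).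
apply: near_eq_cvg; apply: nearW => k /=.
rewrite /delta !fctE /=; field; by rewrite subr_eq0 gt_eqF.
Qed.
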